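(* Let $w$ be a string of length $n$ and $i$ a position of $w$ with $i-\mu(i)\ge1$, $i+\mu(i)-1\le n$ and $\mu(i)>1$. Then there exists an integer $j$ with $i<j<i+\mu(i)$ such that either $\mu(j)=\mu(i)$ or $\mu(j)\ge 2\mu(i)$.
   Context: For a position $i\in\{1,\dots,n\}$ of $w$, the local period $\mu(i)$ is the least positive integer $\mu$ such that $w[j]=w[j+\mu]$ for all $j$ with $\max\{1,i-\mu\}\le j$ and $j+\mu\le\min\{n,i+\mu-1\}$. *)

From mathcomp Require Import all_boot.
Set Implicit Arguments. Unset Strict Implicit. Unset Printing Implicit Defensive.

(* Words are sequences w : seq T over an eqType alphabet; positions are
   1-based: the letter at position p (1 <= p <= size w) is nth x0 w p.-1. *)
Definition letter (T : eqType) (w : seq T) (p : nat) : option T :=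
  nth None (map Some w) p.-1.

Definition lp_cond (T : eqType) (w : seq T) (i m : nat) : bool :=
  [forall j : 'I_(size w).+1,
     ((maxn 1 (i - m) <= j) && (j + m <= minn (size w) (i + m - 1)))
       ==> (letter w j == letter w (j + m))].

Lemma lp_cond_exists (T : eqType) (w : seq T) (i : nat) :
  exists m, (0 < m) && lp_cond w i m.
Proof.
exists (size w).+1; apply/andP; split => //.
apply/forallP => j; apply/implyP => /andP [_ H].
exfalso; move: H; rewrite leq_min => /andP [H _].
by rewrite addnS ltnNge leq_addl in H.
Qed.

Definition mu (T : eqType) (w : seq T) (i : nat) : nat :=
  ex_minn (lp_cond_exists w i).

From mathcomp Require Import all_boot all_order.
From mathcomp Require Import zify.
Set Implicit Arguments. Unset Strict Implicit. Unset Printing Implicit Defensive.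
Import Order.TTheory.

(* Let p = mu(i). The window u = w[i .. i+p-1] has no proper period, since a
   period r of u would make p - r a local period at i. By the critical
   factorization theorem, proved with the lexicographically greatest suffixes of
   u for an order and for its dual, some cut 0 < k < p of u admits no local
   period r < p, so q = mu(i+k) >= p.  If p < q < 2p, the squares of period p
   around i and of period q around i+k overlap enough to produce the local period
   q - p at i+k (when k >= q - p) or 2p - q at i (otherwise), contradicting the
   minimality of q or of p. *)

Section Periods.
Variables (T : Type) (x0 : T).
Implicit Types u : seq T.

Definition period u r :=
  forall x, x + r < size u -> nth x0 u x = nth x0 u (x + r).

(* Positions are 0-based and the cut k lies between u_(k-1) and u_k; the square
   of period r centred at the cut is only required to match inside u. *)
Definition local_period u k r :=
  forall x, k <= x + r -> x < k -> x + r < size u -> nth x0 u x = nth x0 u (x + r).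

Lemma take_drop_eq u a b n :
  a + n <= size u -> b + n <= size u ->
  (forall y, y < n -> nth x0 u (a + y) = nth x0 u (b + y)) ->
  take n (drop a u) = take n (drop b u).
Proof.
move=> an bn E.
have sz c : c + n <= size u -> size (take n (drop c u)) = n.
  by move=> cn; rewrite size_takel // size_drop; lia.
apply: (@eq_from_nth _ x0) => [|y]; first by rewrite !sz.
by rewrite sz // => ly; rewrite !nth_take // !nth_drop E.
Qed.

Lemma drop_take_cat u a n : drop a u = take n (drop a u) ++ drop (a + n) u.
Proof. by rewrite -{1}(cat_take_drop n (drop a u)) drop_drop addnC. Qed.

End Periods.

Section PrefixPeriod.
Variables (T : eqType) (x0 : T).

Lemma period_from_prefix u k r : k <= r -> local_period x0 u k r ->
  prefix (drop (k + r) u) (drop k u) -> period x0 u r.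
Proof.
move=> kr Hloc /prefixP[v Ev] x xr.
case: (ltnP x k) => [xk|kx]; first by apply: Hloc => //; lia.
have := congr1 (nth x0 ^~ (x - k)) Ev.
rewrite nth_cat size_drop ifT; last by lia.
by rewrite !nth_drop addnAC subnKC.
Qed.

End PrefixPeriod.

Section Lexi.
Context {d : Order.disp_t} (T : orderType d).
Implicit Types u s t z : seq T.

Lemma lexi_cat2l z s t : (z ++ s <= z ++ t :> seqlexi T)%O = (s <= t :> seqlexi T)%O.
Proof. by elim: z => //= x z IH; rewrite eqhead_lexiE. Qed.

Lemma lexi_catr s t : (s <= s ++ t :> seqlexi T)%O.
Proof. by rewrite -{1}(cats0 s) lexi_cat2l lexi0s. Qed.

Lemma lexi_dual_prefix s t :
  (s <= t :> seqlexi T)%O -> (s <= t :> seqlexi T^d)%O -> prefix s t.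
Proof.
elim: s t => [|x s IH] [|y t] //=.
rewrite !lexi_cons => /andP[xy xyst] /andP[yx yxst].
have exy : x = y by apply: le_anti; rewrite xy.
by subst; rewrite eqxx IH //; [exact: (implyP xyst) | exact: (implyP yxst)].
Qed.

Lemma exists_max_suffix u : u != [::] ->
  exists2 k, k < size u & forall a, (drop a u <= drop k u :> seqlexi T)%O.
Proof.
case: u => // x u _.
have [k _ Hk] := @arg_maxP _ (seqlexi T) _ ord0 xpredT
  (fun k : 'I_(size u).+1 => drop k (x :: u) : seqlexi T) isT.
exists (nat_of_ord k) => [|a]; first exact: ltn_ord.
case: (ltnP a (size u).+1) => [lt_a|le_a]; first exact: (Hk (Ordinal lt_a)).
by rewrite drop_oversize // lexi0s.
Qed.

End Lexi.

Section CriticalFactorization.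
Context {d : Order.disp_t} (T : orderType d) (x0 : T).

Variables (u : seq T) (k : nat).
Hypothesis k_max : forall a, (drop a u <= drop k u :> seqlexi T)%O.

Lemma max_suffix_no_short_local_period r :
  0 < r <= k -> k < size u -> ~ local_period x0 u k r.
Proof.
move=> /andP[r0 rk] ku Hloc.
have Eshift n : n <= r -> k + n <= size u ->
    take n (drop (k - r) u) = take n (drop k u).
  move=> nr kn; apply: (@take_drop_eq _ x0); [lia | done | move=> y yn].
  by rewrite (Hloc (k - r + y)); [congr nth | | |]; lia.
have sz_eq a b : drop a u = drop b u -> a < size u -> a < b -> False.
  by move/(congr1 size); rewrite !size_drop; lia.
(* The suffix at k - r starts with the first r letters of the suffix at k, or
   with all of it; by maximality two suffixes of different lengths coincide. *)
case: (leqP r (size u - k)) => rsz.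
  have Ek := drop_take_cat u k r.
  have Ekr : drop (k - r) u = take r (drop k u) ++ drop k u.
    by rewrite (drop_take_cat _ _ r) Eshift // ?subnK //; lia.
  have le1 := k_max (k - r); rewrite Ekr {3}Ek lexi_cat2l in le1.
  by apply: (sz_eq k (k + r)) => //; [apply: (@le_anti _ (seqlexi T)); rewrite le1 k_max | lia].
have Ekr : drop (k - r) u = drop k u ++ drop (size u - r) u.
  rewrite (drop_take_cat _ _ (size u - k)) Eshift; [|lia|lia].
  by rewrite take_oversize ?size_drop //; congr (_ ++ drop _ _); lia.
apply: (sz_eq (k - r) k); [|lia|lia].
by apply: (@le_anti _ (seqlexi T)); rewrite k_max Ekr lexi_catr.
Qed.

Variable k' : nat.
Hypothesis k'_max : forall a, (drop a u <= drop k' u :> seqlexi T^d)%O.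

Lemma max_suffixes_long_local_period r : k' < k -> k <= r ->
  local_period x0 u k r -> prefix (drop (k + r) u) (drop k u).
Proof.
move=> k'k kr Hloc.
case: (ltnP (k + r) (size u)) => krs; last by rewrite [drop (k + r) u]drop_oversize ?prefix0s.
apply: lexi_dual_prefix; first exact: k_max.
have Eshift : take (k - k') (drop k' u) = take (k - k') (drop (k' + r) u).
  apply: (@take_drop_eq _ x0); [lia | lia | move=> y yk].
  by rewrite (Hloc (k' + y)); [congr nth | | |]; lia.
(* Maximality for the dual order at k', shifted by the repetition to k. *)
have := k'_max (k' + r).
rewrite (drop_take_cat u k' (k - k')) (drop_take_cat u (k' + r) (k - k')) Eshift lexi_cat2l.
by rewrite subnKC ?(ltnW k'k) // -addnA (addnC r) addnA subnKC // ltnW.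
Qed.

Lemma max_suffixes_no_local_period : k' < k < size u ->
  (forall r, 0 < r < size u -> ~ period x0 u r) ->
  forall r, 0 < r < size u -> ~ local_period x0 u k r.
Proof.
move=> /andP[k'k ku] unb r /andP[r0 ru] Hloc.
case: (leqP r k) => rk; first by apply: (max_suffix_no_short_local_period (r := r)); rewrite ?r0.
apply: (unb r); first by rewrite r0.
exact: period_from_prefix (ltnW rk) Hloc (max_suffixes_long_local_period k'k (ltnW rk) Hloc).
Qed.

End CriticalFactorization.

Lemma critical_factorization_ord d (T : orderType d) (x0 : T) (u : seq T) :
  1 < size u -> (forall r, 0 < r < size u -> ~ period x0 u r) ->
  exists2 k, 0 < k < size u & forall r, 0 < r < size u -> ~ local_period x0 u k r.
Proof.
move=> u1 unb; have u0 : u != [::] by apply: contraTneq u1 => ->.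
have [k1 k1u H1] := exists_max_suffix u0.
have [k2 k2u H2] := exists_max_suffix (T := T^d) u0.
case: (ltngtP k1 k2) => [lt12|lt21|eq12].
- exists k2; first by rewrite k2u (leq_ltn_trans _ lt12).
  by apply: (max_suffixes_no_local_period (T := T^d) H2 H1) => //; rewrite lt12.
- exists k1; first by rewrite k1u (leq_ltn_trans _ lt21).
  by apply: (max_suffixes_no_local_period H1 H2) => //; rewrite lt21.
(* A common greatest suffix for both orders would be a prefix of every suffix. *)
rewrite -{}eq12 in H2; have pre a := lexi_dual_prefix (H1 a) (H2 a).
exfalso; case: k1 {k1u k2u H1 H2} pre => [|k] pre.
  apply: (unb 1 u1); apply: (period_from_prefix (k := 0)) (pre 1) => //.
by move/size_prefix: (pre 0); rewrite drop0 size_drop leqNgt ltn_subrL (ltn_trans _ u1).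
Qed.

Section Recoding.
Variables (T U : eqType) (x0 : T) (f : T -> U) (u : seq T).
Hypothesis f_inj : {in u &, injective f}.

Lemma period_map r : period (f x0) (map f u) r -> period x0 u r.
Proof.
move=> Hv x xr; have xu : x < size u by apply: leq_ltn_trans xr; rewrite leq_addr.
apply: f_inj; rewrite ?mem_nth // -!(nth_map x0 (f x0)) //.
by apply: Hv; rewrite size_map.
Qed.

Lemma local_period_map k r :
  local_period x0 u k r -> local_period (f x0) (map f u) k r.
Proof.
move=> Hloc x lo hi; rewrite size_map => xr.
have xu : x < size u by apply: leq_ltn_trans xr; rewrite leq_addr.
by rewrite !(nth_map x0 (f x0)) // Hloc.
Qed.

End Recoding.

Lemma critical_factorization (T : eqType) (x0 : T) (u : seq T) :
  1 < size u -> (forall r, 0 < r < size u -> ~ period x0 u r) ->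
  exists2 k, 0 < k < size u & forall r, 0 < r < size u -> ~ local_period x0 u k r.
Proof.
have code_inj : {in u &, injective (index ^~ u)} := @index_inj _ x0 u.
move=> u1 unb; rewrite -(size_map (index ^~ u)) in u1 unb *.
have [k k_range Hk] := critical_factorization_ord (x0 := index x0 u) u1
  (fun r r_range Hv => unb r r_range (period_map code_inj Hv)).
by exists k => // r r_range /(local_period_map (f := index ^~ u)); apply: Hk.
Qed.

Section LocalPeriods.
Variables (T : eqType) (w : seq T).

Lemma lp_condP i m :
  reflect (forall x, 1 <= x -> i - m <= x -> x + m <= size w -> x + m <= i + m - 1 ->
             letter w x = letter w (x + m))
          (lp_cond w i m).
Proof.
apply: (iffP forallP) => [H x x1 lo hin hi | H j].
  have x_lt : x < (size w).+1 by lia.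
  have /implyP := H (Ordinal x_lt); rewrite geq_max leq_min x1 lo hin hi => /(_ isT).
  exact: eqP.
by apply/implyP; rewrite geq_max leq_min => /andP[/andP[x1 lo] /andP[hin hi]]; apply/eqP/H.
Qed.

Lemma lp_cond_letter i m x : lp_cond w i m ->
  1 <= x -> i - m <= x -> x + m <= size w -> x + m <= i + m - 1 ->
  letter w x = letter w (x + m).
Proof. by move/lp_condP; apply. Qed.

Lemma mu_gt0 i : 0 < mu w i.
Proof. by rewrite /mu; case: ex_minnP => m /andP[]. Qed.

Lemma lp_cond_mu i : lp_cond w i (mu w i).
Proof. by rewrite /mu; case: ex_minnP => m /andP[]. Qed.

Lemma mu_min i m : 0 < m -> lp_cond w i m -> mu w i <= m.
Proof. by move=> m0 Hm; rewrite /mu; case: ex_minnP => p _; apply; rewrite m0. Qed.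

Lemma lp_cond_square i p : 1 <= i - p -> i + p - 1 <= size w -> lp_cond w i p ->
  forall x, i - p <= x < i -> letter w x = letter w (x + p).
Proof. by move=> ip ipn Hp x /andP[lo hi]; apply: (lp_cond_letter Hp); lia. Qed.

Definition window i p := take p (drop i.-1 (map Some w)).

Lemma size_window i p : 1 <= i -> i + p - 1 <= size w -> size (window i p) = p.
Proof. by move=> i1 ipn; rewrite size_takel // size_drop size_map; lia. Qed.

Lemma nth_window i p y : 1 <= i -> y < p ->
  nth None (window i p) y = letter w (i + y).
Proof.
by move=> i1 yp; rewrite nth_take // nth_drop /letter; congr nth; lia.
Qed.

Variables (i p : nat).
Hypotheses (ip : 1 <= i - p) (ipn : i + p - 1 <= size w) (Hp : lp_cond w i p).

Lemma window_period_lp_cond r : 0 < r < p ->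
  period None (window i p) r -> lp_cond w i (p - r).
Proof.
move=> /andP[r0 rp] Hper; apply/lp_condP => x x1 lo hin hi.
rewrite (lp_cond_square ip ipn Hp); last by lia.
have y_lt : x + (p - r) - i + r < size (window i p) by rewrite size_window; lia.
have := Hper _ y_lt; rewrite !nth_window; [|lia..].
have -> : i + (x + (p - r) - i) = x + (p - r) by lia.
by have -> : i + (x + (p - r) - i + r) = x + p by lia.
Qed.

Lemma window_local_period k q : k < p -> lp_cond w (i + k) q ->
  local_period None (window i p) k q.
Proof.
move=> kp Hq x lo hi; rewrite size_window; [move=> xq | lia | done].
by rewrite !nth_window ?addnA; [apply: (lp_cond_letter Hq) | ..]; lia.
Qed.

Lemma lp_cond_diff_right k q : p < q -> q - p <= k < p ->
  lp_cond w (i + k) q -> lp_cond w (i + k) (q - p).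
Proof.
move=> pq /andP[lo_k hi_k] Hq; apply/lp_condP => x x1 lo hin hi.
have xp : p <= x by lia.
rewrite -[X in letter w X](subnK xp) -(lp_cond_square ip ipn Hp); last by lia.
by rewrite (lp_cond_letter Hq); [congr letter | ..]; lia.
Qed.

Lemma lp_cond_diff_left k q : p < q < 2 * p -> k < q - p ->
  lp_cond w (i + k) q -> lp_cond w i (2 * p - q).
Proof.
move=> /andP[pq q2p] hk Hq; apply/lp_condP => y y1 lo hin hi.
rewrite (lp_cond_square ip ipn Hp); last by lia.
have -> : y + p = y + p - q + q by lia.
rewrite -(lp_cond_letter Hq); [|lia..].
by rewrite (lp_cond_square ip ipn Hp); [congr letter | ]; lia.
Qed.

End LocalPeriods.

Theorem lemma8 (T : eqType) (w : seq T) (i : nat) :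
  1 <= i <= size w ->
  1 <= i - mu w i ->
  i + mu w i - 1 <= size w ->
  1 < mu w i ->
  exists j : nat, i < j < i + mu w i /\
    (mu w j = mu w i \/ 2 * mu w i <= mu w j).
Proof.
move=> _ ip ipn p1; set p := mu w i in ip ipn p1 *.
have Hp : lp_cond w i p := lp_cond_mu w i.
have u_size : size (window w i p) = p by rewrite size_window; lia.
have u_unb r : 0 < r < size (window w i p) -> ~ period None (window w i p) r.
  rewrite u_size => r_range /(window_period_lp_cond ip ipn Hp r_range) Hr.
  have pr : 0 < p - r by rewrite subn_gt0; case/andP: r_range.
  by have := mu_min pr Hr; lia.
have u1 : 1 < size (window w i p) by rewrite u_size.
have [k] := critical_factorization u1 u_unb.
rewrite u_size => /andP[k0 kp] Hk; exists (i + k); split; first lia.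
set q := mu w (i + k); have Hq : lp_cond w (i + k) q := lp_cond_mu w (i + k).
have pq : p <= q.
  rewrite leqNgt; apply/negP => qp; apply: (Hk q); first by rewrite mu_gt0.
  exact: window_local_period.
case: (eqVneq q p) => [|qp]; [by left | right].
rewrite leqNgt; apply/negP => q2p.
case: (leqP (q - p) k) => hk.
  have qp0 : 0 < q - p by rewrite subn_gt0 ltn_neqAle eq_sym qp pq.
  have := mu_min qp0 (lp_cond_diff_right ip ipn Hp _ _ Hq); lia.
have pq0 : 0 < 2 * p - q by lia.
have := mu_min pq0 (lp_cond_diff_left ip ipn Hp _ hk Hq); lia.
Qed.
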